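(* Suppose $c_1\ge-1$, $c_2\ge-1$ and $c_3<\bar c_3(c_1,c_2)$. Then $(1-x^2)U'+2xU+\frac12U^2=P_c(x)$ has no solution in $C^1(-1,1)$.
   Context: $P_c(x):=c_1(1-x)+c_2(1+x)+c_3(1-x^2)$ for $c=(c_1,c_2,c_3)$. $\bar c_3(c_1,c_2):=-\frac12(\sqrt{1+c_1}+\sqrt{1+c_2})(\sqrt{1+c_1}+\sqrt{1+c_2}+2)$. *)

From Stdlib Require Import Reals.
From Coquelicot Require Import Coquelicot.
Open Scope R_scope.

Definition P_c (c1 c2 c3 x : R) : R :=
  c1 * (1 - x) + c2 * (1 + x) + c3 * (1 - x ^ 2).

Definition c3bar (c1 c2 : R) : R :=
  - / 2 * (sqrt (1 + c1) + sqrt (1 + c2)) * (sqrt (1 + c1) + sqrt (1 + c2) + 2).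

Definition C1_on_open_interval (U : R -> R) : Prop :=
  forall x, -1 < x < 1 -> ex_derive U x /\ continuous (Derive U) x.

From Stdlib Require Import Reals Lra.
From Coquelicot Require Import Coquelicot.
Open Scope R_scope.

(* With [s_i = sqrt (1 + c_i)], the line [L x = s1 - s2 - (2 + s1 + s2) x] solves the
   equation for [c3 = c3bar c1 c2], and with the weight [mu = (1 - x)^s2 (1 + x)^s1]
   the gap [E = mu (U - L)] satisfies [E' = - (c3bar - c3) mu - E^2 / (2 mu (1 - x^2))].
   So [E] is strictly decreasing and obeys the Riccati inequalities
   [E' <= - K E^2 / (1 + x)] and [E' <= - K E^2 / (1 - x)].  If [E x0 > 0], then [1 / E]
   is positive on [(-1, x0)] with [(1 / E)' >= K / (1 + x)], so it tends to [-oo] at [-1]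
   like [K ln (1 + x)]; symmetrically [E x0 < 0] forces a blow-up at [1].  Hence [E = 0],
   contradicting strict monotonicity. *)

Lemma decreasing_of_derive_neg (f df : R -> R) (a b : R) :
  (forall x, a < x < b -> is_derive f x (df x)) ->
  (forall x, a < x < b -> df x < 0) ->
  forall x y, a < x -> x < y -> y < b -> f y < f x.
Proof.
  intros Hd Hneg x y Hax Hxy Hyb.
  apply Ropp_lt_cancel.
  apply (incr_function (fun t => - f t) (Finite a) (Finite b) (fun t => - df t));
    simpl; auto.
  - intros t Hat Htb. apply (is_derive_opp f). apply Hd; lra.
  - intros t Hat Htb. specialize (Hneg t (conj Hat Htb)). lra.
Qed.

(* [G - (K/2) ln (x - a)] is increasing, so [G x] drops below any bound as [x -> a+]. *)
Lemma no_positive_log_blowup (a b K : R) (G dG : R -> R) :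
  a < b -> 0 < K ->
  (forall x, a < x < b -> is_derive G x (dG x)) ->
  (forall x, a < x < b -> K / (x - a) <= dG x) ->
  ~ (forall x, a < x < b -> 0 < G x).
Proof.
  intros Hab HK Hd Hdg Hpos.
  set (m := (a + b) / 2).
  set (Phi := fun x => G x - K / 2 * ln (x - a)).
  assert (Phi_incr : forall x, a < x < m -> Phi x < Phi m).
  { intros x Hx.
    apply (incr_function Phi (Finite a) (Finite b) (fun y => dG y - K / 2 * / (y - a)));
      simpl; unfold m in *; try lra.
    - intros y Hay Hyb. apply (is_derive_minus G (fun y => K / 2 * ln (y - a))).
      + apply Hd; lra.
      + auto_derive; [lra | field; lra].
    - intros y Hay Hyb.
      assert (K / (y - a) <= dG y) by (apply Hdg; lra).
      assert (0 < / (y - a)) by (apply Rinv_0_lt_compat; lra).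
      unfold Rdiv in *. nra. }
  set (t := exp (- (2 / K) * Phi m)).
  assert (Ht : 0 < t) by apply exp_pos.
  set (x := a + Rmin ((m - a) / 2) t).
  assert (Hxa : x - a = Rmin ((m - a) / 2) t) by (unfold x; ring).
  assert (0 < x - a) by (rewrite Hxa; apply Rmin_pos; unfold m; lra).
  assert (x - a <= (m - a) / 2) by (rewrite Hxa; apply Rmin_l).
  assert (Hln : ln (x - a) <= - (2 / K) * Phi m).
  { rewrite <- (ln_exp (- (2 / K) * Phi m)).
    apply ln_le; [lra | rewrite Hxa; apply Rmin_r]. }
  assert (HPhi := Phi_incr x ltac:(unfold m in *; lra)).
  assert (HG := Hpos x ltac:(unfold m in *; lra)).
  unfold Phi at 1 in HPhi.
  assert (K / 2 * ln (x - a) <= - Phi m).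
  { replace (- Phi m) with (K / 2 * (- (2 / K) * Phi m)) by (field; lra).
    apply Rmult_le_compat_l; lra. }
  lra.
Qed.

Lemma riccati_nonpos_left (a b K : R) (E dE : R -> R) :
  0 < K ->
  (forall x, a < x < b -> is_derive E x (dE x)) ->
  (forall x, a < x < b -> dE x < 0) ->
  (forall x, a < x < b -> dE x <= - K * E x ^ 2 / (x - a)) ->
  forall x, a < x < b -> E x <= 0.
Proof.
  intros HK Hd Hneg Hric x0 Hx0.
  destruct (Rle_or_lt (E x0) 0) as [Hle | Hpos]; [exact Hle | exfalso].
  assert (E_gt : forall x, a < x < x0 -> E x0 < E x).
  { intros x Hx. apply (decreasing_of_derive_neg E dE a b); auto; lra. }
  apply (no_positive_log_blowup a x0 K (fun x => / E x) (fun x => - dE x / E x ^ 2));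
    try lra.
  - intros x Hx. apply is_derive_inv.
    + apply Hd; lra.
    + specialize (E_gt x Hx). lra.
  - intros x Hx.
    specialize (E_gt x Hx). specialize (Hric x ltac:(lra)).
    assert (0 < E x ^ 2) by nra.
    apply (Rmult_le_reg_r (E x ^ 2)); [lra |].
    replace (- dE x / E x ^ 2 * E x ^ 2) with (- dE x) by (field; lra).
    replace (- K * E x ^ 2 / (x - a)) with (- (K / (x - a) * E x ^ 2)) in Hric
      by (field; lra).
    lra.
  - intros x Hx. apply Rinv_0_lt_compat. specialize (E_gt x Hx). lra.
Qed.

(* The reflection [y |-> - E (- y)] turns the right endpoint into a left one. *)
Lemma riccati_nonneg_right (a b K : R) (E dE : R -> R) :
  0 < K ->
  (forall x, a < x < b -> is_derive E x (dE x)) ->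
  (forall x, a < x < b -> dE x < 0) ->
  (forall x, a < x < b -> dE x <= - K * E x ^ 2 / (b - x)) ->
  forall x, a < x < b -> 0 <= E x.
Proof.
  intros HK Hd Hneg Hric x Hx.
  enough (Hrefl : - E (- - x) <= 0) by (rewrite Ropp_involutive in Hrefl; lra).
  apply (riccati_nonpos_left (- b) (- a) K (fun y => - E (- y)) (fun y => dE (- y)));
    auto; try lra.
  - intros y Hy.
    replace (dE (- y)) with (- (scal (-1) (dE (- y))))
      by (unfold scal; simpl; unfold mult; simpl; ring).
    apply (is_derive_opp (fun y => E (- y))).
    apply (is_derive_comp E Ropp).
    + apply Hd; lra.
    + auto_derive; [easy | ring].
  - intros y Hy. apply Hneg; lra.
  - intros y Hy.
    replace ((- E (- y)) ^ 2) with (E (- y) ^ 2) by ring.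
    replace (y - - b) with (b - - y) by ring.
    apply Hric; lra.
Qed.

Section Weighted_gap.

Variables c1 c2 c3 : R.
Hypotheses (Hc1 : -1 <= c1) (Hc2 : -1 <= c2) (Hc3 : c3 < c3bar c1 c2).
Variable U : R -> R.
Hypothesis U_derivable : forall x, -1 < x < 1 -> ex_derive U x.
Hypothesis U_ode : forall x, -1 < x < 1 ->
  (1 - x ^ 2) * Derive U x + 2 * x * U x + / 2 * (U x) ^ 2 = P_c c1 c2 c3 x.

Let s1 := sqrt (1 + c1).
Let s2 := sqrt (1 + c2).

Definition critical_solution (x : R) : R := s1 - s2 - (2 + s1 + s2) * x.

Definition weight (x : R) : R := exp (s2 * ln (1 - x) + s1 * ln (1 + x)).

Definition weighted_gap (x : R) : R := weight x * (U x - critical_solution x).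

Let slope (x : R) : R :=
  - (c3bar c1 c2 - c3) * weight x - weighted_gap x ^ 2 / (2 * weight x * (1 - x ^ 2)).

Lemma weight_pos (x : R) : 0 < weight x.
Proof. apply exp_pos. Qed.

Lemma weight_le (x : R) : -1 < x < 1 -> weight x <= exp ((s1 + s2) * ln 2).
Proof.
  intros Hx.
  assert (ln (1 - x) <= ln 2) by (apply ln_le; lra).
  assert (ln (1 + x) <= ln 2) by (apply ln_le; lra).
  assert (0 <= s1) by apply sqrt_pos.
  assert (0 <= s2) by apply sqrt_pos.
  apply Rnot_lt_le. intros Hlt%exp_lt_inv. nra.
Qed.

Lemma weighted_gap_derive (x : R) : -1 < x < 1 -> is_derive weighted_gap x (slope x).
Proof.
  intros Hx.
  assert (Hs1 : s1 * s1 = 1 + c1) by (apply sqrt_sqrt; lra).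
  assert (Hs2 : s2 * s2 = 1 + c2) by (apply sqrt_sqrt; lra).
  assert (HU' : Derive U x
                = (P_c c1 c2 c3 x - 2 * x * U x - / 2 * U x ^ 2) / (1 - x ^ 2)).
  { specialize (U_ode x Hx). field_simplify_eq; nra. }
  unfold weighted_gap, weight, critical_solution.
  auto_derive; [repeat split; try lra; apply U_derivable; lra |].
  change (Derive (fun t => U t) x) with (Derive U x).
  rewrite HU'.
  unfold slope, weighted_gap, weight, critical_solution, c3bar, P_c.
  fold s1 s2.
  replace (1 + - x) with (1 - x) by ring.
  replace c1 with (s1 * s1 - 1) by lra.
  replace c2 with (s2 * s2 - 1) by lra.
  field. repeat split; try nra. apply Rgt_not_eq, exp_pos.
Qed.

Lemma slope_neg (x : R) : -1 < x < 1 -> slope x < 0.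
Proof.
  intros Hx.
  assert (Hw := weight_pos x).
  assert (0 < 1 - x ^ 2) by nra.
  assert (0 <= weighted_gap x ^ 2 / (2 * weight x * (1 - x ^ 2))).
  { apply Rmult_le_pos; [apply pow2_ge_0 | apply Rlt_le, Rinv_0_lt_compat; nra]. }
  assert (0 < (c3bar c1 c2 - c3) * weight x) by (apply Rmult_lt_0_compat; lra).
  unfold slope. lra.
Qed.

Let K := / (4 * exp ((s1 + s2) * ln 2)).

Lemma K_pos : 0 < K.
Proof.
  apply Rinv_0_lt_compat.
  assert (0 < exp ((s1 + s2) * ln 2)) by apply exp_pos. lra.
Qed.

(* Drop the [weight] term of [slope], bound [weight] by its maximum [2^(s1+s2)] and
   the factor [1 -+ x] of [1 - x^2] by [2]. *)
Lemma slope_riccati (x : R) : -1 < x < 1 ->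
  slope x <= - K * weighted_gap x ^ 2 / (x + 1) /\
  slope x <= - K * weighted_gap x ^ 2 / (1 - x).
Proof.
  intros Hx.
  assert (Hw := weight_pos x). assert (HwM := weight_le x Hx).
  set (w := weight x) in *. set (M := exp ((s1 + s2) * ln 2)) in *.
  set (E2 := weighted_gap x ^ 2).
  assert (0 <= E2) by apply pow2_ge_0.
  assert (Hslope : slope x <= - E2 * / (2 * w * (1 - x ^ 2))).
  { assert (0 < (c3bar c1 c2 - c3) * w) by (apply Rmult_lt_0_compat; lra).
    unfold slope. fold w E2. unfold Rdiv. lra. }
  assert (Hfactor : forall y, 0 < y < 2 -> 1 - x ^ 2 = y * (2 - y) ->
            slope x <= - K * E2 / y).
  { intros y Hy Hxy.
    assert (/ (4 * M * y) <= / (2 * w * (1 - x ^ 2))).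
    { assert (0 < w * (2 - y)) by (apply Rmult_lt_0_compat; lra).
      apply Rinv_le_contravar; rewrite Hxy; nra. }
    replace (- K * E2 / y) with (- E2 * / (4 * M * y)) by (unfold K; field; lra).
    assert (E2 * / (4 * M * y) <= E2 * / (2 * w * (1 - x ^ 2)))
      by (apply Rmult_le_compat_l; lra).
    lra. }
  split; apply Hfactor; try lra; ring.
Qed.

Lemma weighted_gap_contradiction : False.
Proof.
  assert (Hd := weighted_gap_derive).
  assert (Hneg := slope_neg).
  assert (HK := K_pos).
  assert (Hle := riccati_nonpos_left (-1) 1 K weighted_gap slope HK Hd Hneg).
  assert (Hge := riccati_nonneg_right (-1) 1 K weighted_gap slope HK Hd Hneg).
  assert (Hdecr := decreasing_of_derive_neg weighted_gap slope (-1) 1 Hd Hneg (-1/2) 0).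
  assert (weighted_gap (-1/2) <= 0).
  { apply Hle; [| lra]. intros x Hx. replace (x - -1) with (x + 1) by ring.
    apply (slope_riccati x Hx). }
  assert (0 <= weighted_gap 0).
  { apply Hge; [| lra]. intros x Hx. apply (slope_riccati x Hx). }
  lra.
Qed.

End Weighted_gap.

Theorem lemma2p6 (c1 c2 c3 : R) :
  -1 <= c1 -> -1 <= c2 -> c3 < c3bar c1 c2 ->
  ~ (exists U : R -> R,
       C1_on_open_interval U /\
       forall x, -1 < x < 1 ->
         (1 - x ^ 2) * Derive U x + 2 * x * U x + / 2 * (U x) ^ 2 = P_c c1 c2 c3 x).
Proof.
  intros Hc1 Hc2 Hc3 [U [HC1 Hode]].
  apply (weighted_gap_contradiction c1 c2 c3 Hc1 Hc2 Hc3 U); [| exact Hode].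
  intros x Hx. exact (proj1 (HC1 x Hx)).
Qed.
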